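(* For every even integer $k\geq 2$ and every integer $d\geq 1$, there are infinitely many arithmetic progressions $\{a_1, a_2,\dots,a_k\}$ of positive integers of length $k$ and common difference $d$ such that $\sum_{i=1}^{k} \lambda(a_i)=0$, where $\lambda$ is the Liouville function.
   Context: The Liouville function is $\lambda(n)=(-1)^{\Omega(n)}$, where $\Omega(n)$ is the number of prime factors of $n$ counted with multiplicity. *)

From mathcomp Require Import all_boot all_order all_algebra.
Set Implicit Arguments. Unset Strict Implicit. Unset Printing Implicit Defensive.
Import GRing.Theory Num.Theory.

(* Big Omega: number of prime factors of n counted with multiplicity
   (Omega 0 is irrelevant here; it is 0 by this definition). *)
Definition bigOmega (n : nat) : nat := \sum_(p <- primes n) logn p n.

Definition liouville (n : nat) : int := ((-1) ^+ bigOmega n)%R.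

(* Since λ is completely multiplicative, λ(dm + id) = λ(d) λ(m + i), so it is
   enough to find infinitely many m with W(m) = Σ_{i<k} λ(m + i) = 0.  As k is
   even, W(m) is even, and W(m + 1) - W(m) = λ(m + k) - λ(m) has absolute value at
   most 2; so if W never vanished beyond some point it would keep a constant
   sign there, say W ≥ 1 (otherwise replace λ by -λ).  Adding up windows gives
   k Σ_{n≤y} λ(n) ≥ y - C, hence
     k Σ_{n≤x} λ(n) ⌊x/n⌋ = k Σ_{j≤x} Σ_{n≤x/j} λ(n) ≥ Σ_{j≤x} ⌊x/j⌋ - C x,
   which grows like x log x.  But Σ_{n≤x} λ(n) ⌊x/n⌋ = Σ_{m≤x} Σ_{n|m} λ(n)
   lies in [0, x], since each inner sum is 0 or 1. *)

From mathcomp Require Import all_boot all_order all_algebra zify ring.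
From Stdlib Require Classical_Prop.
Import Order.TTheory GRing.Theory Num.Theory.
Set Implicit Arguments. Unset Strict Implicit. Unset Printing Implicit Defensive.

Lemma bigOmega_ord n B : (n < B)%N -> bigOmega n = \sum_(p < B) logn p n.
Proof.
move=> nB; rewrite /bigOmega -(big_mkord xpredT (fun p => logn p n)).
rewrite [RHS](bigID (fun p => p \in primes n)) /= [X in (_ + X)%N]big1 ?addn0; last first.
  by move=> p /negbTE; rewrite -logn_gt0 lt0n => /negbFE/eqP.
rewrite -[RHS]big_filter; apply: perm_big; apply: uniq_perm.
- exact: primes_uniq.
- by rewrite filter_uniq // iota_uniq.
move=> p; rewrite mem_filter mem_index_iota /=.
case pP: (p \in primes n) => //=; move: pP; rewrite mem_primes => /and3P[_ n0 pn].
by rewrite (leq_ltn_trans (dvdn_leq n0 pn) nB).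
Qed.

Lemma bigOmegaM a b : (0 < a)%N -> (0 < b)%N ->
  bigOmega (a * b) = (bigOmega a + bigOmega b)%N.
Proof.
move=> a0 b0; have ab_lt : (a * b < (a * b).+1)%N by [].
have a_lt : (a < (a * b).+1)%N by rewrite ltnS leq_pmulr.
have b_lt : (b < (a * b).+1)%N by rewrite ltnS leq_pmull.
rewrite (bigOmega_ord ab_lt) (bigOmega_ord a_lt) (bigOmega_ord b_lt) -big_split /=.
by apply: eq_bigr => p _; rewrite lognM.
Qed.

Lemma bigOmega_prime p : prime p -> bigOmega p = 1%N.
Proof.
by move=> pp; rewrite /bigOmega primes_prime // big_cons big_nil logn_prime // eqxx.
Qed.

Lemma perm_divisors_pmul_dvd p m : (0 < p)%N -> (0 < m)%N ->
  perm_eq [seq n <- divisors (p * m) | (p %| n)%N] [seq (p * e)%N | e <- divisors m].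
Proof.
move=> p0 m0; have pm0 : (0 < p * m)%N by rewrite muln_gt0 p0.
apply: uniq_perm.
- by rewrite filter_uniq // divisors_uniq.
- by rewrite map_inj_uniq ?divisors_uniq // => x y /eqP; rewrite eqn_pmul2l // => /eqP.
move=> n; rewrite mem_filter -dvdn_divisors //; apply/andP/mapP.
  move=> [pn nd]; exists (n %/ p); last by rewrite mulnC divnK.
  by rewrite -dvdn_divisors // -(dvdn_pmul2l p0) [(p * _)%N]mulnC divnK.
move=> [e ed ->]; rewrite -dvdn_divisors // in ed.
by rewrite dvdn_mulr // dvdn_pmul2l.
Qed.

Lemma perm_divisors_pmul_ndvd p m : prime p -> (0 < m)%N ->
  perm_eq [seq n <- divisors (p * m) | ~~ (p %| n)%N]
          [seq n <- divisors m | ~~ (p %| n)%N].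
Proof.
move=> pp m0; have pm0 : (0 < p * m)%N by rewrite muln_gt0 prime_gt0.
apply: uniq_perm; rewrite ?filter_uniq ?divisors_uniq //.
move=> n; rewrite !mem_filter -!dvdn_divisors //.
case pn: (p %| n)%N => //=.
by rewrite Gauss_dvdr // coprime_sym prime_coprime // pn.
Qed.

Lemma sum_divisors_iota (V : nmodType) (f : nat -> V) m : (0 < m)%N ->
  (\sum_(n <- divisors m) f n = \sum_(1 <= n < m.+1 | (n %| m)%N) f n)%R.
Proof.
move=> m0; rewrite -[RHS]big_filter; apply: perm_big; apply: uniq_perm.
- exact: divisors_uniq.
- by rewrite filter_uniq // iota_uniq.
move=> n; rewrite mem_filter mem_index_iota -dvdn_divisors //.
by case nm: (n %| m)%N; rewrite //= (dvdn_gt0 m0 nm) ltnS dvdn_leq.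
Qed.

Local Open Scope ring_scope.

Lemma liouvilleM a b : (0 < a)%N -> (0 < b)%N ->
  liouville (a * b) = liouville a * liouville b.
Proof. by move=> a0 b0; rewrite /liouville bigOmegaM // exprD. Qed.

Lemma liouville_prime p : prime p -> liouville p = -1.
Proof. by move=> pp; rewrite /liouville bigOmega_prime. Qed.

Lemma liouville1 : liouville 1 = 1.
Proof. by rewrite /liouville /bigOmega (_ : primes 1 = [::]) // big_nil. Qed.

Lemma liouvilleE n : liouville n = 1 - (odd (bigOmega n)).*2%:R.
Proof. by rewrite /liouville -signr_odd signrE. Qed.

Lemma normr_liouville n : `|liouville n| = 1.
Proof. exact: normr_sign. Qed.

Definition liouville_divsum m := \sum_(n <- divisors m) liouville n.

Lemma sum_liouville_pmul_dvd p m : prime p -> (0 < m)%N ->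
  \sum_(n <- [seq n <- divisors (p * m) | (p %| n)%N]) liouville n = - liouville_divsum m.
Proof.
move=> pp m0; have p0 := prime_gt0 pp.
rewrite (perm_big _ (perm_divisors_pmul_dvd p0 m0)) big_map /liouville_divsum -sumrN.
rewrite big_seq [RHS]big_seq; apply: eq_bigr => e; rewrite -dvdn_divisors // => ed.
by rewrite liouvilleM ?(dvdn_gt0 m0 ed) // liouville_prime // mulN1r.
Qed.

Lemma liouville_divsum_pmul p m : prime p -> (0 < m)%N ->
  liouville_divsum (p * m) = - \sum_(n <- [seq n <- divisors m | (p %| n)%N]) liouville n.
Proof.
move=> pp m0.
have split s : \sum_(n <- s) liouville n =
    \sum_(n <- [seq n <- s | (p %| n)%N]) liouville n
  + \sum_(n <- [seq n <- s | ~~ (p %| n)%N]) liouville n.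
  by rewrite !big_filter [LHS](bigID (fun n => p %| n)%N).
rewrite {1}/liouville_divsum split sum_liouville_pmul_dvd //.
by rewrite (perm_big _ (perm_divisors_pmul_ndvd pp m0)) /liouville_divsum split; ring.
Qed.

Lemma liouville_divsum_psqr p m : prime p -> (0 < m)%N ->
  liouville_divsum (p * (p * m)) = liouville_divsum m.
Proof.
move=> pp m0; have pm0 : (0 < p * m)%N by rewrite muln_gt0 prime_gt0.
by rewrite liouville_divsum_pmul // sum_liouville_pmul_dvd // opprK.
Qed.

Lemma liouville_divsum_pmul_ndvd p m : prime p -> (0 < m)%N -> ~~ (p %| m)%N ->
  liouville_divsum (p * m) = 0.
Proof.
move=> pp m0 pNm; rewrite liouville_divsum_pmul // big_seq big1 ?oppr0 //.
move=> n; rewrite mem_filter -dvdn_divisors // => /andP[pn nm].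
by rewrite (dvdn_trans pn nm) in pNm.
Qed.

(* In fact [liouville_divsum m] is 1 if m is a square and 0 otherwise. *)
Lemma liouville_divsum_bounds m : (0 < m)%N -> 0 <= liouville_divsum m <= 1.
Proof.
elim/ltn_ind: m => m IH m0.
case: (ltngtP m 1) => [|m_gt1|->]; first by rewrite ltnNge m0.
- have pp := pdiv_prime m_gt1; set p := pdiv m in pp *.
  have m'_gt0 : (0 < m %/ p)%N by rewrite divn_gt0 ?prime_gt0 // dvdn_leq // pdiv_dvd.
  have -> : m = (p * (m %/ p))%N by rewrite mulnC divnK // pdiv_dvd.
  have [pm'|pNm'] := boolP (p %| m %/ p)%N; last by rewrite liouville_divsum_pmul_ndvd.
  have m''_gt0 : (0 < m %/ p %/ p)%N by rewrite divn_gt0 ?prime_gt0 // dvdn_leq.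
  rewrite -[(m %/ p)%N](divnK pm') [(_ * p)%N]mulnC liouville_divsum_psqr //; apply: IH => //.
  by rewrite (leq_ltn_trans (leq_div _ _)) // ltn_Pdiv ?prime_gt1.
- by rewrite /liouville_divsum (_ : divisors 1 = [:: 1%N]) // big_seq1 liouville1.
Qed.

Definition floor_sum (f : nat -> int) x := \sum_(1 <= n < x.+1) f n *+ (x %/ n).

Definition partial_sum (f : nat -> int) y := \sum_(1 <= n < y.+1) f n.

Lemma floor_sum_divisors f x :
  floor_sum f x = \sum_(1 <= m < x.+1) \sum_(n <- divisors m) f n.
Proof.
elim: x => [|x IH]; first by rewrite /floor_sum !big_geq.
have -> : floor_sum f x.+1 = \sum_(1 <= n < x.+2) f n *+ (n %| x.+1)%N
                            + \sum_(1 <= n < x.+2) f n *+ (x %/ n).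
  rewrite /floor_sum -big_split /=; apply: eq_big_nat => n /andP[n_gt0 _].
  by rewrite divnS // mulrnDr.
rewrite [X in _ + X]big_nat_recr //= divn_small // mulr0n addr0 -/(floor_sum f x) IH.
rewrite [RHS]big_nat_recr //= addrC; congr (_ + _).
by rewrite sum_divisors_iota // [RHS]big_mkcond; apply: eq_bigr => n _; rewrite mulrb.
Qed.

Lemma floor_sum_liouville_bounds x : 0 <= floor_sum liouville x <= x%:Z.
Proof.
rewrite floor_sum_divisors; apply/andP; split.
  rewrite big_nat_cond; apply: sumr_ge0 => m /andP[/andP[m_gt0 _] _].
  by case/andP: (liouville_divsum_bounds m_gt0).
apply: (@le_trans _ _ (\sum_(1 <= m < x.+1) (1 : int))).
  by apply: ler_sum_nat => m /andP[m_gt0 _]; case/andP: (liouville_divsum_bounds m_gt0).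
by rewrite sumr_const_nat subn1 natz.
Qed.

Lemma floor_sumN f x : floor_sum (fun n => - f n) x = - floor_sum f x.
Proof. by rewrite /floor_sum -sumrN; apply: eq_bigr => n _; rewrite mulNrn. Qed.

Lemma big_nat_mul_leq (V : nmodType) (c : nat -> V) d x : (0 < d)%N ->
  \sum_(1 <= j < x.+1) (if (j * d <= x)%N then c j else 0) = \sum_(1 <= j < (x %/ d).+1) c j.
Proof.
move=> d_gt0; rewrite [RHS](big_nat_widen _ _ _ _ _ (_ : (x %/ d).+1 <= x.+1)%N) ?ltnS ?leq_div //.
by rewrite -big_mkcond /=; apply: eq_bigl => j; rewrite -[RHS]/(j <= x %/ d)%N leq_divRL.
Qed.

Lemma floor_sum_partial f x : floor_sum f x = \sum_(1 <= j < x.+1) partial_sum f (x %/ j).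
Proof.
transitivity (\sum_(1 <= n < x.+1) \sum_(1 <= j < x.+1) (if (j * n <= x)%N then f n else 0)).
  apply: eq_big_nat => n /andP[n_gt0 _].
  by rewrite (big_nat_mul_leq (fun _ => f n)) // sumr_const_nat subn1.
rewrite exchange_big_nat /=; apply: eq_big_nat => j /andP[j_gt0 _].
by rewrite /partial_sum -(big_nat_mul_leq f _ j_gt0); apply: eq_big_nat => n _; rewrite mulnC.
Qed.

Definition divisor_summatory x := (\sum_(1 <= j < x.+1) x %/ j)%N.

Lemma divisor_summatory_double x :
  (2 * divisor_summatory x + x <= divisor_summatory (2 * x))%N.
Proof.
rewrite /divisor_summatory [X in (_ <= X)%N](big_cat_nat _ (n := x.+1)) //=; last by lia.
rewrite mulnC big_distrl /= leq_add //.
  apply: leq_sum => j _; case: (posnP j) => [->|j_gt0]; first by rewrite !divn0.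
  by rewrite leq_divRL // mulnAC [(2 * x)%N]mulnC leq_mul2r leq_divM orbT.
apply: (@leq_trans (\sum_(x.+1 <= j < (2 * x).+1) 1)%N).
  by rewrite sum_nat_const_nat subSS muln1 mul2n -addnn addnK.
rewrite big_nat_cond [X in (_ <= X)%N]big_nat_cond; apply: leq_sum => j /andP[/andP[xj jx] _].
by rewrite divn_gt0 ?(leq_trans _ xj) // -ltnS.
Qed.

Lemma divisor_summatory_pow2 t : (t.+1 * 2 ^ t <= 2 * divisor_summatory (2 ^ t))%N.
Proof.
elim: t => [|t IH]; first by rewrite /divisor_summatory big_nat1.
by have := divisor_summatory_double (2 ^ t); rewrite expnS; move: IH; lia.
Qed.

Section BiasedWindows.

Variables (f : nat -> int) (k M : nat).
Hypothesis f_le1 : forall n, `|f n| <= 1.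
Hypothesis window_ge1 : forall m, (M <= m)%N -> 1 <= \sum_(i < k) f (m + i)%N.

(* C absorbs the initial range y < M + k, where only |f| <= 1 is available. *)
Let C := (k.+1 * (M + k))%N.

Lemma partial_sum_lb y : y%:Z - C%:Z <= k%:Z * partial_sum f y.
Proof.
have partial_sum_ge y' : - y'%:Z <= partial_sum f y'.
  apply: (@le_trans _ _ (\sum_(1 <= n < y'.+1) (-1 : int))).
    by rewrite sumr_const_nat subn1 mulNrn natz.
  by apply: ler_sum_nat => n _; have := f_le1 n; lia.
elim/ltn_ind: y => y IH.
have [y_small|y_large] := ltnP y (M + k).
  have := ler_wpM2l (ler0n _ k) (partial_sum_ge y).
  have : (y * k.+1 <= C)%N by rewrite /C mulnC leq_mul2l ltnW.
  by rewrite mulrN; lia.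
have k_gt0 : (0 < k)%N.
  by rewrite lt0n; apply/eqP => k0; have := window_ge1 (leqnn M); rewrite k0 big_ord0.
set a := (y - k).+1.
have -> : partial_sum f y = partial_sum f (y - k) + \sum_(i < k) f (a + i)%N.
  rewrite /partial_sum; have -> : y.+1 = (a + k)%N.
    by rewrite /a addSn subnK // (leq_trans (leq_addl M k)).
  rewrite (big_cat_nat _ (n := a)) ?leq_addr //=; congr (_ + _).
  by rewrite -{1}(add0n a) big_addn addKn big_mkord; apply: eq_bigr => i _; rewrite addnC.
have := IH (y - k)%N (ltac:(lia)).
have := ler_wpM2l (ler0n _ k) (window_ge1 (ltac:(lia) : (M <= a)%N)).
by rewrite mulrDr mulr1; lia.
Qed.

Lemma floor_sum_lb x :
  (divisor_summatory x)%:Z - (C * x)%:Z <= k%:Z * floor_sum f x.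
Proof.
rewrite floor_sum_partial mulr_sumr /divisor_summatory.
apply: (@le_trans _ _ (\sum_(1 <= j < x.+1) ((x %/ j)%:Z - C%:Z))).
  rewrite sumrB sumr_const_nat subn1 /= -mulr_natr natz -PoszM.
  by rewrite -(big_morph Posz PoszD (erefl (Posz 0))).
by apply: ler_sum_nat => j _; apply: partial_sum_lb.
Qed.

Lemma floor_sum_not_le : ~ (forall x, floor_sum f x <= x%:Z).
Proof.
move=> floor_sum_le; pose t := (2 * (C + k))%N.
(* At x = 2^t the lower bound (t + 1) x / 2 on [divisor_summatory x] beats (C + k) x. *)
have D_le : (divisor_summatory (2 ^ t) <= (C + k) * 2 ^ t)%N.
  have := floor_sum_lb (2 ^ t)%N.
  by have := ler_wpM2l (ler0n _ k) (floor_sum_le (2 ^ t)%N); lia.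
have := divisor_summatory_pow2 t; move: D_le; rewrite /t; set x := (2 ^ _)%N; nia.
Qed.

End BiasedWindows.

Lemma even_steps_gt0 (V : nat -> int) M :
  (forall m, exists z, V m = 2 * z) -> (forall m, `|V m.+1 - V m| <= 2) ->
  (forall m, (M <= m)%N -> V m != 0) ->
  0 < V M -> forall m, (M <= m)%N -> 0 < V m.
Proof.
move=> V_even V_step V_neq0 VM_gt0 m /subnKC <-.
elim: (m - M)%N => [|j IH]; first by rewrite addn0.
have [z1 E1] := V_even (M + j)%N; have [z2 E2] := V_even (M + j).+1.
move: (V_neq0 _ (leq_addr j.+1 M)); rewrite !addnS => V_neq0'.
by move: IH (V_step (M + j)%N); lia.
Qed.

Lemma even_steps_sign_constant (V : nat -> int) M :
  (forall m, exists z, V m = 2 * z) -> (forall m, `|V m.+1 - V m| <= 2) ->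
  (forall m, (M <= m)%N -> V m != 0) ->
  (forall m, (M <= m)%N -> 0 < V m) \/ (forall m, (M <= m)%N -> V m < 0).
Proof.
move=> V_even V_step V_neq0; have [VM_gt0|VM_le0] := ltP 0 (V M).
  by left; apply: even_steps_gt0.
right=> m Mm; rewrite -oppr_gt0; move: m Mm; apply: (even_steps_gt0 (V := fun m => - V m)).
- by move=> m; have [z ->] := V_even m; exists (- z); rewrite mulrN.
- by move=> m; rewrite -opprD normrN.
- by move=> m Mm; rewrite oppr_eq0 V_neq0.
- by rewrite oppr_gt0 lt_neqAle VM_le0 V_neq0.
Qed.

Definition liouville_window k m := \sum_(i < k) liouville (m + i)%N.

Lemma liouville_window_scale k d m : (0 < d)%N -> (0 < m)%N ->
  \sum_(i < k) liouville (d * m + i * d) = liouville d * liouville_window k m.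
Proof.
move=> d_gt0 m_gt0; rewrite /liouville_window mulr_sumr; apply: eq_bigr => i _.
by rewrite -liouvilleM ?addn_gt0 ?m_gt0 // mulnDr [(i * d)%N]mulnC.
Qed.

Lemma liouville_window_even k m : ~~ odd k -> exists z, liouville_window k m = 2 * z.
Proof.
move=> k_even; exists (k./2%:Z - \sum_(i < k) (odd (bigOmega (m + i)))%:Z).
rewrite /liouville_window (eq_bigr _ (fun i _ => liouvilleE _)) sumrB sumr_const card_ord.
under eq_bigr do rewrite -mul2n natrM !natz.
by rewrite -mulr_sumr [k%:R]natz mulrBr -{1}(even_halfK k_even) -mul2n PoszM.
Qed.

Lemma liouville_window_succ k m :
  liouville_window k m.+1 = liouville_window k m - liouville m + liouville (m + k).
Proof.
have recl : \sum_(i < k.+1) liouville (m + i) = liouville m + liouville_window k m.+1.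
  by rewrite big_ord_recl addn0; congr (_ + _); apply: eq_bigr => i _; rewrite addSnnS.
have recr : \sum_(i < k.+1) liouville (m + i) = liouville_window k m + liouville (m + k).
  by rewrite big_ord_recr.
by move: recl recr; lia.
Qed.

Lemma liouville_window_step k m : `|liouville_window k m.+1 - liouville_window k m| <= 2.
Proof.
have := normr_liouville m; have := normr_liouville (m + k).
by rewrite liouville_window_succ; lia.
Qed.

Lemma liouville_window_zero_after k N : ~~ odd k ->
  exists2 m, (N < m)%N & liouville_window k m = 0.
Proof.
move=> k_even; apply: Classical_Prop.NNPP => no_zero.
have W_neq0 m : (N.+1 <= m)%N -> liouville_window k m != 0.
  by move=> Nm; apply/eqP => W0; apply: no_zero; exists m.
have [W_gt0|W_lt0] := even_steps_sign_constant
  (fun m => @liouville_window_even k m k_even) (liouville_window_step k) W_neq0.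
- apply: (@floor_sum_not_le liouville k N.+1).
  + by move=> n; rewrite normr_liouville.
  + by move=> m /W_gt0; rewrite -gtz0_ge1.
  + by move=> x; case/andP: (floor_sum_liouville_bounds x).
- apply: (@floor_sum_not_le (fun n => - liouville n) k N.+1).
  + by move=> n; rewrite normrN normr_liouville.
  + by move=> m /W_lt0; rewrite sumrN -gtz0_ge1 oppr_gt0.
  + move=> x; rewrite floor_sumN.
    by case/andP: (floor_sum_liouville_bounds x) => H_ge0 _; lia.
Qed.

Theorem corollary5p2 (k d : nat) :
  ~~ odd k -> (2 <= k)%N -> (1 <= d)%N ->
  forall N : nat, exists a : nat, (N < a)%N /\ (0 < a)%N /\
    (\sum_(i < k) liouville (a + i * d) = 0)%R.
Proof.
move=> k_even _ d_gt0 N.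
have [m Nm W0] := liouville_window_zero_after N k_even.
have m_gt0 : (0 < m)%N := leq_ltn_trans (leq0n N) Nm.
exists (d * m)%N; split; first by rewrite (leq_trans Nm) // leq_pmull.
by rewrite muln_gt0 d_gt0 m_gt0 liouville_window_scale // W0 mulr0.
Qed.
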